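(* Consider a check node decoder (CND) whose EXIT function on the BEC is $$I_{E,C}(p)=\sum_{j\ge2}\rho^{(\mathrm{SPC})}_j(1-p)^{j-1}+\sum_{i}\rho_i\,I^{(i)}_{E,C}(p),$$ where the nonnegative edge fractions $\rho^{(\mathrm{SPC})}_j$ and $\rho_i$ sum to $1$, and for each $i$, $I^{(i)}_{E,C}$ is the check-node EXIT function of an $(n_i,k_i)$ binary linear code $\mathcal{C}_i$ with $n_i\ge2$, $k_i\ge1$ and $d_{\min}(\mathcal{C}_i)\ge2$. Then $$\frac{\mathrm{d}I_{E,C}(p)}{\mathrm{d}p}\Big|_{p=0}=-\rho'_{\mathrm{SPC}}(1)-\sum_{i:\,d_{\min}(\mathcal{C}_i)=2}\frac{2\rho_i}{n_i}\,\Delta^{(i)}_{n_i-2},$$ i.e. only the component codes $\mathcal{C}_i$ with minimum distance exactly $2$ (together with the SPC terms) contribute.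
   Context: $\rho_{\mathrm{SPC}}(x)=\sum_{j\ge2}\rho^{(\mathrm{SPC})}_jx^{j-1}$, so $\rho'_{\mathrm{SPC}}(1)=\sum_{j\ge2}(j-1)\rho^{(\mathrm{SPC})}_j$. For an $(n,k)$ code with $k\times n$ generator matrix $\mathbf{G}$ of rank $k$: $\tilde e_g=\sum_{|S|=g}\operatorname{rank}(\mathbf{G}_S)$ (sum over $g$-element sets $S$ of columns), $a_t=(n-t)\tilde e_{n-t}-(t+1)\tilde e_{n-t-1}$, and its check-node EXIT function is $I_E(p)=1-\frac1n\sum_{t=0}^{n-1}a_tp^t(1-p)^{n-t-1}$. $\Delta^{(i)}_{n_i-2}=\sum_{|S|=n_i-2}\big(k_i-\operatorname{rank}(\mathbf{G}^{(i)}_S)\big)$, the sum over all $(n_i-2)$-element column sets of a generator matrix $\mathbf{G}^{(i)}$ of $\mathcal{C}_i$ (this value does not depend on the choice of generator matrix). *)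

From HB Require Import structures.
From mathcomp Require Import all_boot all_order all_algebra all_field.
Set Implicit Arguments. Unset Strict Implicit. Unset Printing Implicit Defensive.
Import Order.TTheory GRing.Theory Num.Theory.
Local Open Scope ring_scope.

(* Binary linear codes given by a k x n generator matrix over GF(2). *)

Definition colS (k n : nat) (G : 'M['F_2]_(k, n)) (S : {set 'I_n})
  : 'M['F_2]_(k, #|S|) := colsub (fun j : 'I_#|S| => enum_val j) G.

Definition etilde (k n : nat) (G : 'M['F_2]_(k, n)) (g : nat) : nat :=
  (\sum_(S : {set 'I_n} | #|S| == g) \rank (colS G S))%N.

Definition acoef (R : ringType) (k n : nat) (G : 'M['F_2]_(k, n)) (t : nat) : R :=
  (n - t)%:R * (etilde G (n - t))%:R - (t.+1)%:R * (etilde G (n - t - 1))%:R.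

Definition exitCN (R : fieldType) (k n : nat) (G : 'M['F_2]_(k, n)) : {poly R} :=
  1 - (n%:R)^-1 *: \sum_(t < n) (acoef R G t *: ('X ^+ t * (1 - 'X) ^+ (n - t - 1))).

Definition Delta (k n : nat) (G : 'M['F_2]_(k, n)) : nat :=
  (\sum_(S : {set 'I_n} | #|S| == (n - 2)%N) (k - \rank (colS G S)))%N.

Definition wt (n : nat) (c : 'rV['F_2]_n) : nat := #|[set j | c 0 j != 0]|.

(* Minimum distance: minimum weight of a nonzero codeword (codeword = vector
   in the row space of G); equals n.+1 if there is no nonzero codeword. *)
Definition dmin (k n : nat) (G : 'M['F_2]_(k, n)) : nat :=
  \big[minn/n.+1]_(c : 'rV['F_2]_n | (c <= G)%MS && (c != 0)) wt c.

Definition exitCND (R : fieldType) (J m : nat) (rhoS : nat -> R)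
  (rho : 'I_m -> R) (k n : 'I_m -> nat)
  (G : forall i : 'I_m, 'M['F_2]_(k i, n i)) : {poly R} :=
  \sum_(2 <= j < J.+1) (rhoS j *: (1 - 'X) ^+ (j - 1))
  + \sum_(i < m) (rho i *: exitCN R (G i)).

From HB Require Import structures.
From mathcomp Require Import all_boot all_order all_algebra all_field.
Set Implicit Arguments. Unset Strict Implicit. Unset Printing Implicit Defensive.
Import Order.TTheory GRing.Theory Num.Theory.
Local Open Scope ring_scope.

(* Since I'(0) is the coefficient of p in the polynomial I(p), the claim is
   linear in the components, and the main work is one code C = (n, k) with
   generator matrix G of full rank k and d_min >= 2.  In the sum
   sum_t a_t p^t (1-p)^(n-t-1) only t = 0 and t = 1 contribute to the
   coefficient of p, namely -(n-1) a_0 + a_1.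
   The coding-theoretic input is: if S is a set of columns whose complement
   has fewer than d_min elements, then G_S still has rank k, since a message
   killed by G_S yields a codeword supported on the complement of S.
   Hence e~_n = k and e~_(n-1) = n k, so a_0 = 0, and
   e~_(n-2) + Delta_(n-2) = C(n,2) k, so a_1 = 2 Delta_(n-2); when
   d_min >= 3 the same fact gives Delta_(n-2) = 0.  The file proves the
   coefficient identities for (1-p)^m, then the rank facts, then the values
   of a_0 and a_1, and finally assembles the theorem. *)

Lemma coef0_one_minus_X_pow (R : comNzRingType) (m : nat) :
  ((1 - 'X : {poly R}) ^+ m)`_0 = 1.
Proof. by rewrite -horner_coef0 !hornerE subr0 expr1n. Qed.

Lemma coef1_one_minus_X_pow (R : comNzRingType) (m : nat) :
  ((1 - 'X : {poly R}) ^+ m)`_1 = - m%:R.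
Proof.
elim: m => [|m IH]; first by rewrite expr0 coef1 oppr0.
rewrite exprSr mulrBr mulr1 coefB coefMX /= IH coef0_one_minus_X_pow.
by rewrite mulrS opprD addrC.
Qed.

Lemma coef1_bernstein_sum (R : comNzRingType) (n : nat) (a : nat -> R) :
  (2 <= n)%N ->
  (\sum_(t < n) a t *: ('X ^+ t * (1 - 'X) ^+ (n - t - 1)))`_1
    = - (a 0%N * (n - 1)%:R) + a 1%N.
Proof.
case: n => [|[|n]] // _; rewrite coef_sum 2!big_ord_recl big1 => [|t _]; last first.
  by rewrite coefZ coefXnM mulr0.
rewrite addr0 !coefZ expr0 mul1r subn0 subn1 coef1_one_minus_X_pow.
by rewrite coefXnM /= subnDA subn1 /= coef0_one_minus_X_pow mulr1 mulrN.
Qed.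

Section ColumnSubsets.
Variables (k n : nat) (G : 'M['F_2]_(k, n)).

Lemma dmin_le_wt (c : 'rV['F_2]_n) : (c <= G)%MS -> c != 0 -> (dmin G <= wt c)%N.
Proof.
move=> cG c0; rewrite /dmin -minEnat.
by apply: (@bigmin_le_cond _ nat _ n.+1 c _ (@wt n)); rewrite cG c0.
Qed.

Lemma colS_mulmx (S : {set 'I_n}) (u : 'rV_k) (j : 'I_#|S|) :
  (u *m colS G S) 0 j = (u *m G) 0 (enum_val j).
Proof. by rewrite !mxE; apply: eq_bigr => i _; rewrite !mxE. Qed.

Lemma wt_vanishing (c : 'rV['F_2]_n) (S : {set 'I_n}) :
  (forall j, j \in S -> c 0 j = 0) -> (wt c <= n - #|S|)%N.
Proof.
move=> cS; rewrite -[n in (n - _)%N]card_ord -(cardsC S) addKn subset_leq_card //.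
by apply/subsetP => j; rewrite !inE; apply: contra => jS; rewrite cS.
Qed.

(* Key fact: G_S keeps full rank k when fewer than d_min columns are removed,
   since a nonzero message killed by G_S would encode to a nonzero codeword
   of weight at most n - |S|. *)
Lemma rank_colS (S : {set 'I_n}) :
  \rank G = k -> (n - #|S| < dmin G)%N -> \rank (colS G S) = k.
Proof.
move=> rkG ltSd; apply/eqP; rewrite eqn_leq rank_leq_row row_leq_rank.
apply: inj_row_free => u uS0.
have cS : forall j, j \in S -> (u *m G) 0 j = 0.
  by move=> j jS; rewrite -(enum_rankK_in jS jS) -colS_mulmx uS0 mxE.
have /eqP : u *m G = 0.
  apply: contraTeq ltSd => c0; rewrite -leqNgt.
  exact: leq_trans (dmin_le_wt (submxMl u G) c0) (wt_vanishing cS).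
by rewrite mulmx_free_eq0 ?/row_free ?rkG // => /eqP.
Qed.
End ColumnSubsets.

Lemma card_sets_of_size (n g : nat) :
  #|[pred S : {set 'I_n} | #|S| == g]| = 'C(n, g).
Proof.
rewrite -[n in 'C(n, _)](card_ord n) -card_draws.
by apply: eq_card => S; rewrite !inE.
Qed.

Section RankSums.
Variables (k n : nat) (G : 'M['F_2]_(k, n)).
Hypothesis rkG : \rank G = k.

Lemma etilde_full (g : nat) :
  (n - g < dmin G)%N -> (g <= n)%N -> etilde G g = ('C(n, g) * k)%N.
Proof.
move=> ltgd leg; rewrite /etilde (eq_bigr (fun _ => k)) => [|S /eqP cardS].
  by rewrite sum_nat_const card_sets_of_size.
by rewrite rank_colS // cardS.
Qed.

Lemma etilde_add_Delta : (2 <= n)%N ->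
  (etilde G (n - 2) + Delta G = 'C(n, 2) * k)%N.
Proof.
move=> len; rewrite /etilde /Delta -big_split /= (eq_bigr (fun _ => k)) => [|S _].
  by rewrite sum_nat_const card_sets_of_size bin_sub.
by rewrite subnKC // rank_leq_row.
Qed.

Lemma Delta_eq0 : (2 <= n)%N -> (3 <= dmin G)%N -> Delta G = 0%N.
Proof.
move=> len led; rewrite /Delta big1 // => S /eqP cardS.
by rewrite rank_colS ?subnn // cardS subKn.
Qed.
End RankSums.

Section ExitCoefficients.
Variables (R : fieldType) (k n : nat) (G : 'M['F_2]_(k, n)).
Hypotheses (rkG : \rank G = k) (len : (2 <= n)%N) (led : (2 <= dmin G)%N).

Lemma etilde_n : etilde G n = k.
Proof. by rewrite etilde_full ?subnn ?binn ?mul1n //; case: (dmin G) led. Qed.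

Lemma etilde_n1 : etilde G (n - 1) = (n * k)%N.
Proof. by rewrite etilde_full ?subKn ?leq_subr ?bin_sub ?bin1 // ltnW. Qed.

Lemma acoef0_eq0 : acoef R G 0 = 0.
Proof. by rewrite /acoef !subn0 etilde_n etilde_n1 natrM mul1r subrr. Qed.

Lemma acoef1_eq : acoef R G 1 = 2 * (Delta G)%:R.
Proof.
have pairs : ((n - 1) * (n * k) = 2 * etilde G (n - 2) + 2 * Delta G)%N.
  rewrite -mulnDr etilde_add_Delta // !mulnA -mul_bin_diag bin1 -subn1.
  by rewrite [(n * _)%N]mulnC.
rewrite /acoef etilde_n1 -subnDA -natrM pairs natrD !natrM.
by rewrite addrAC subrr add0r.
Qed.

Lemma exitCN_coef1 : (exitCN R G)`_1 = - (2 / n%:R * (Delta G)%:R).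
Proof.
rewrite /exitCN coefB coef1 sub0r coefZ coef1_bernstein_sum //.
by rewrite acoef0_eq0 acoef1_eq mul0r oppr0 add0r mulrCA mulrA.
Qed.
End ExitCoefficients.

Lemma deriv_at0 (R : nzRingType) (p : {poly R}) : p^`().[0] = p`_1.
Proof. by rewrite horner_coef0 coef_deriv. Qed.

(* The slope of the whole decoder: SPC terms contribute -(j-1) rho_j, codes with
   d_min = 2 contribute -(2 rho_i / n_i) Delta_(n_i - 2), all other codes 0. *)
Theorem mainTheorem6 (R : realFieldType) (J m : nat) (rhoS : nat -> R)
  (rho : 'I_m -> R) (k n : 'I_m -> nat)
  (G : forall i : 'I_m, 'M['F_2]_(k i, n i))
  (hrhoS : forall j, (2 <= j <= J)%N -> 0 <= rhoS j)
  (hrho : forall i, 0 <= rho i)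
  (hsum : \sum_(2 <= j < J.+1) rhoS j + \sum_(i < m) rho i = 1)
  (hn : forall i, (2 <= n i)%N)
  (hk : forall i, (1 <= k i)%N)
  (hrank : forall i, \rank (G i) = k i)
  (hd : forall i, (2 <= dmin (G i))%N) :
  (exitCND J rhoS rho G)^`().[0] =
    - \sum_(2 <= j < J.+1) ((j - 1)%:R * rhoS j)
    - \sum_(i < m | dmin (G i) == 2%N)
        (2 * rho i / (n i)%:R * (Delta (G i))%:R).
Proof.
rewrite deriv_at0 /exitCND coefD !coef_sum -!sumrN; congr (_ + _).
  by apply: eq_bigr => j _; rewrite coefZ coef1_one_minus_X_pow mulrN mulrC.
rewrite [RHS]big_mkcond /=; apply: eq_bigr => i _.
rewrite coefZ exitCN_coef1 // mulrN !mulrA [rho i * 2]mulrC.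
case: eqP => [//|dmin_ne2].
have dmin_ge3 : (3 <= dmin (G i))%N by rewrite ltn_neqAle hd andbT eq_sym; apply/eqP.
by rewrite Delta_eq0 // mulr0 oppr0.
Qed.
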